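(* For all positive integers $n$ and $k$, $C_{n,k}^{(3)}=c_3(n,k)$, where $C_{n,k}^{(3)}=\binom{2n}{3n+k}_3-\binom{2n}{3n+k+1}_3$ for $0\le k\le 3n$ and $C_{n,k}^{(3)}=0$ otherwise, and $c_3(n,k)$ is the number of $\mathcal C_3$-paths from $(0,0)$ to $(n,k)$.
   Context: The quadrinomial coefficients $\binom{n}{k}_3$ are defined by $(1+x+x^2+x^3)^n=\sum_{k\in\mathbb Z}\binom{n}{k}_3x^k$ (zero for $k<0$ or $k>3n$). A $\mathcal C_3$-path is a lattice path starting at $(0,0)$, given as a finite sequence of steps from the set $\{(0,1),(0,-1),(1,1),(1,-1),(1,2),(1,-2)\}$ (North, South, and North-East/South-East diagonal steps), all of whose visited points lie in the quarter-plane $x\ge0,\ y\ge0$, subject to: (1) the first step is $(1,1)$; (2) no three consecutive steps are vertical (i.e. in $\{(0,1),(0,-1)\}$); (3) a step $(0,-1)$ never immediately follows a step $(1,-2)$, and a step $(0,1)$ never immediately follows a step $(1,2)$; (4) for each point $(i,j)$ of the path: if $j=0$, the step leaving this point is not $(1,2)$; if $j=1$ and the step leaving this point is $(1,1)$, then the two steps immediately following it are not both $(0,-1)$; if $j=2$ and the step leaving this point is $(1,-1)$, then the step immediately following it is not $(0,-1)$.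
   Formalization: In a $\mathcal C_3$-path a step (0,1) is also never immediately followed by a step (0,-1), nor a step (0,-1) by a step (0,1). The statement above fails without it. *)

From mathcomp Require Import all_boot all_order all_algebra.
Set Implicit Arguments. Unset Strict Implicit. Unset Printing Implicit Defensive.
Import Order.TTheory GRing.Theory Num.Theory.
Local Open Scope ring_scope.

Definition quadri (n k : nat) : int :=
  ((1 + 'X + 'X^2 + 'X^3 : {poly int}) ^+ n)`_k.

Definition C3coef (n k : nat) : int :=
  if (k <= 3 * n)%N then quadri (2 * n) (3 * n + k) - quadri (2 * n) (3 * n + k + 1)
  else 0.

(* A step is a vector in Z^2; a path is a sequence of steps starting at (0,0). *)
Definition step := (int * int)%type.

Definition allowed_steps : seq step :=
  [:: (0, 1); (0, -1); (1, 1); (1, -1); (1, 2); (1, -2)].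

Definition vertical (s : step) : bool := (s == (0, 1)) || (s == (0, -1)).

Definition stp (p : seq step) (t : nat) : step := nth (0, 0) p t.

(* coordinates of the t-th visited point (point 0 is the origin, point t is
   reached after the first t steps); point t is the point the t-th step leaves *)
Definition posx (p : seq step) (t : nat) : int := \sum_(s <- take t p) s.1.
Definition posy (p : seq step) (t : nat) : int := \sum_(s <- take t p) s.2.

Definition C3path (p : seq step) : Prop :=
  (forall t, (t < size p)%N -> stp p t \in allowed_steps) /\
  [/\
      (forall t, (t <= size p)%N -> 0 <= posx p t /\ 0 <= posy p t) /\
      (0 < size p)%N /\ stp p 0 = (1, 1),
      (forall t, (t.+2 < size p)%N ->
         ~ [/\ vertical (stp p t), vertical (stp p t.+1) & vertical (stp p t.+2)]),
      (* (0) implicit convention: no immediate backtracking,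
         i.e. a step (0,1) is never immediately followed by (0,-1) nor
         (0,-1) by (0,1) *)
      (forall t, (t.+1 < size p)%N ->
         ~ (vertical (stp p t) /\ vertical (stp p t.+1) /\ stp p t <> stp p t.+1)) /\
      (forall t, (t.+1 < size p)%N ->
         (stp p t = (1, -2) -> stp p t.+1 <> (0, -1)) /\
         (stp p t = (1, 2) -> stp p t.+1 <> (0, 1))) &
      (forall t, (t < size p)%N ->
         [/\ posy p t = 0 -> stp p t <> (1, 2),
             posy p t = 1 -> stp p t = (1, 1) -> (t.+2 < size p)%N ->
               ~ (stp p t.+1 = (0, -1) /\ stp p t.+2 = (0, -1)) &
             posy p t = 2 -> stp p t = (1, -1) -> (t.+1 < size p)%N ->
               stp p t.+1 <> (0, -1)])].

Definition endpoint (p : seq step) : int * int := (posx p (size p), posy p (size p)).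

Definition paths_count_is (P : seq step -> Prop) (m : nat) : Prop :=
  exists s : seq (seq step), [/\ uniq s, (forall p, p \in s <-> P p) & size s = m].

Definition C3path_to (n k : nat) (p : seq step) : Prop :=
  C3path p /\ endpoint p = (n%:Z, k%:Z).

(* A C3-path splits uniquely into columns: a diagonal step followed by at most two
   vertical steps in one direction.  The rules (2), (3) and the absence of backtracking
   leave exactly 16 columns, whose heights are distributed like i + j - 3 with
   i, j in {0,..,3}.  Hence sequences of n columns of total height z, ignoring the quarter
   plane and rule (4), are counted by h(n,z), the coefficient of x^(3n+z) in
   (1+x+x^2+x^3)^(2n).  The quarter plane and rule (4) only restrict columns starting at
   height at most 2, and there they act as a reflection across height -1/2: the
   difference h(n,z) - h(n,z+1), antisymmetric under z -> -1-z, satisfies the constrained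
   recursion for every z >= 0 (a finite check for z <= 5).  So c_3(n,k) = h(n,k) - h(n,k+1). *)

From mathcomp Require Import all_boot all_order all_algebra zify ring.
Set Implicit Arguments. Unset Strict Implicit. Unset Printing Implicit Defensive.
Import GRing.Theory Num.Theory.
Local Open Scope ring_scope.

Definition width (p : seq step) : int := \sum_(s <- p) s.1.

Definition height (p : seq step) : int := \sum_(s <- p) s.2.

Lemma height_cons s p : height (s :: p) = s.2 + height p.
Proof. exact: big_cons. Qed.

Lemma height_cat p q : height (p ++ q) = height p + height q.
Proof. exact: big_cat. Qed.

Lemma width_cat p q : width (p ++ q) = width p + width q.
Proof. exact: big_cat. Qed.

Lemma height_rcons p s : height (rcons p s) = height p + s.2.
Proof. by rewrite -cats1 height_cat /height big_seq1. Qed.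

Lemma width_rcons p s : width (rcons p s) = width p + s.1.
Proof. by rewrite -cats1 width_cat /width big_seq1. Qed.

(* A step [s] leaving a point at height [y], preceded by [p2] and then [p1]; [(0, 0)],
   which is not a step, stands for a missing predecessor. *)
Definition shape_ok (p2 p1 s : step) : bool :=
  [&& s \in allowed_steps,
      ~~ [&& vertical p2, vertical p1 & vertical s],
      ~~ [&& vertical p1, vertical s & p1 != s],
      (p1 == (1, -2)) ==> (s != (0, -1)) &
      (p1 == (1, 2)) ==> (s != (0, 1))].

Definition height_ok (y : int) (p2 p1 s : step) : bool :=
  [&& 0 <= y + s.2,
      (y == 0) ==> (s != (1, 2)),
      ~~ [&& y == 1, p2 == (1, 1), p1 == (0, -1) & s == (0, -1)] &
      ~~ [&& y == 1, p1 == (1, -1) & s == (0, -1)]].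

Definition step_ok (y : int) (p2 p1 s : step) : bool :=
  shape_ok p2 p1 s && height_ok y p2 p1 s.

Fixpoint admissible (y : int) (p2 p1 : step) (p : seq step) : bool :=
  if p is s :: p' then step_ok y p2 p1 s && admissible (y + s.2) p1 s p' else true.

Lemma admissibleP y p2 p1 p :
  admissible y p2 p1 p <->
  (forall t, (t < size p)%N -> step_ok (y + height (take t p))
     (nth (0, 0) [:: p2, p1 & p] t) (nth (0, 0) (p1 :: p) t) (nth (0, 0) p t)).
Proof.
elim: p y p2 p1 => [|s p IH] y p2 p1 /=; first by [].
split=> [/andP[ok_s /IH ok_p] [|t] lt_t | ok].
- by rewrite take0 /height big_nil addr0.
- by rewrite height_cons addrA; apply: ok_p.
- apply/andP; split; first by have := ok 0%N isT; rewrite take0 /height big_nil addr0.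
  by apply/IH => t lt_t; have := ok t.+1 lt_t; rewrite /= height_cons addrA.
Qed.

Lemma posyS p t : (t < size p)%N -> posy p t.+1 = posy p t + (stp p t).2.
Proof. by move=> lt_t; rewrite /posy (take_nth (0, 0) lt_t) -/(height _) height_rcons. Qed.

Lemma posxS p t : (t < size p)%N -> posx p t.+1 = posx p t + (stp p t).1.
Proof. by move=> lt_t; rewrite /posx (take_nth (0, 0) lt_t) -/(width _) width_rcons. Qed.

Lemma allowed_x_ge0 s : s \in allowed_steps -> 0 <= s.1.
Proof. by have /allP := isT : all (fun s : step => 0 <= s.1) allowed_steps; apply. Qed.

Lemma admissible_C3path p :
  head (0, 0) p = (1, 1) -> admissible 0 (0, 0) (0, 0) p -> C3path p.
Proof.
move=> head_p /admissibleP adm.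
pose w2 t := if t is t'.+2 then stp p t' else (0, 0).
pose w1 t := if t is t'.+1 then stp p t' else (0, 0).
have ok t : (t < size p)%N -> step_ok (posy p t) (w2 t) (w1 t) (stp p t).
  by move=> lt_t; have := adm t lt_t; rewrite add0r; case: t lt_t => [|[|t]].
have shape t : (t < size p)%N -> shape_ok (w2 t) (w1 t) (stp p t) by move=> /ok/andP[].
have heights t : (t < size p)%N -> height_ok (posy p t) (w2 t) (w1 t) (stp p t).
  by move=> /ok/andP[].
have p_gt0 : (0 < size p)%N by move: head_p; case: (p).
have allowed t : (t < size p)%N -> stp p t \in allowed_steps by case/shape/and5P.
split=> //; split.
- split; last by rewrite /stp nth0.
  elim=> [|t IH] le_t; first by rewrite /posx /posy take0 !big_nil.
  have [x_ge0 y_ge0] := IH (ltnW le_t).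
  rewrite posxS // posyS //; case/heights/and4P: (le_t) => -> _ _ _; split=> //.
  by rewrite addr_ge0 // allowed_x_ge0 // allowed.
- move=> t /shape/and5P[_ no_three _ _ _] [v0 v1 v2].
  by move: no_three; rewrite /= v0 v1 v2.
- split=> t /shape/and5P[_ _ no_back no_down no_up].
  + by case=> v0 [v1 /eqP ne]; move: no_back; rewrite /= v0 v1 ne.
  + by split=> e0 e1; [move: no_down | move: no_up]; rewrite -[w1 _]/(stp p t) e0 e1.
- move=> t lt_t; split.
  + by move=> y0; case/heights/and4P: lt_t => _ + _ _; rewrite y0 eqxx => /eqP.
  + move=> y1 up lt_t2 [down1 down2].
    case/heights/and4P: (lt_t2) => _ _ /negP + _; apply.
    have lt_t1 : (t.+1 < size p)%N by apply: ltn_trans lt_t2.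
    by rewrite -[w2 _]/(stp p t) -[w1 _]/(stp p t.+1) posyS // posyS // y1 up down1 down2 !eqxx.
  + move=> y2 diag lt_t1 down.
    case/heights/and4P: (lt_t1) => _ _ _ /negP; apply.
    by rewrite -[w1 _]/(stp p t) posyS // y2 diag down !eqxx.
Qed.

Lemma C3path_admissible p : C3path p -> admissible 0 (0, 0) (0, 0) p.
Proof.
case=> allowed [[quarter _] no_three [no_back no_turn] at_height].
apply/admissibleP => t lt_t; rewrite add0r -/(posy p t) -/(stp p t).
apply/andP; split; apply/and5P || apply/and4P; split.
- exact: allowed.
- case: t lt_t => [|[|t]] //= lt_t.
  by apply/negP => /and3P[v0 v1 v2]; apply: (no_three t lt_t).
- case: t lt_t => [|t] //= lt_t.
  by apply/negP => /and3P[v0 v1 /eqP ne]; apply: (no_back t lt_t).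
- case: t lt_t => [|t] //= lt_t.
  by apply/implyP => /eqP e0; apply/eqP; apply: (no_turn t lt_t).1.
- case: t lt_t => [|t] //= lt_t.
  by apply/implyP => /eqP e0; apply/eqP; apply: (no_turn t lt_t).2.
- by rewrite -posyS //; case: (quarter t.+1 lt_t).
- by apply/implyP => /eqP y0; apply/eqP; case: (at_height t lt_t) => + _ _; apply.
- case: t lt_t => [|[|t]] /= lt_t; rewrite ?andbF //.
  apply/negP => /and4P[/eqP y1 /eqP up /eqP down1 /eqP down2].
  have lt_t1 : (t.+1 < size p)%N by apply: ltn_trans lt_t.
  have lt_t0 : (t < size p)%N by apply: ltn_trans lt_t1.
  case: (at_height t lt_t0) => _ /(_ _ up lt_t) + _; apply=> //.
  by move: y1; rewrite -[height _]/(posy p t.+2) posyS // posyS // /stp up down1 /=; lia.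
- case: t lt_t => [|t] /= lt_t; rewrite ?andbF //.
  apply/negP => /and3P[/eqP y1 /eqP diag /eqP down].
  have lt_t0 : (t < size p)%N by apply: ltn_trans lt_t.
  case: (at_height t lt_t0) => _ _ /(_ _ diag lt_t); apply=> //.
  by move: y1; rewrite -[height _]/(posy p t.+1) posyS // /stp diag /=; lia.
Qed.

Lemma C3pathP p : C3path p <-> head (0, 0) p = (1, 1) /\ admissible 0 (0, 0) (0, 0) p.
Proof.
split=> [C3p | [head_p adm]]; last exact: admissible_C3path.
split; last exact: C3path_admissible.
by case: C3p => _ [[_ [_ <-]] _ _ _]; rewrite /stp nth0.
Qed.

Lemma admissible_cat y p2 p1 p q :
  admissible y p2 p1 (p ++ q) =
  admissible y p2 p1 p && admissible (y + height p) (last p2 (belast p1 p)) (last p1 p) q.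
Proof.
elim: p y p2 p1 => [|s p IH] y p2 p1 /=; first by rewrite /height big_nil addr0.
by rewrite IH height_cons addrA andbA.
Qed.

Lemma step_ok_nonvertical y p2 p1 s :
  ~~ vertical s -> step_ok y p2 p1 s = step_ok y (0, 0) (0, 0) s.
Proof.
rewrite /vertical negb_or => /andP[/negbTE s_up /negbTE s_down].
by rewrite /step_ok /shape_ok /height_ok /vertical s_up s_down !andbF !implybT.
Qed.

Lemma step_ok_after_nonvertical y p2 p1 s :
  ~~ vertical p1 -> step_ok y p2 p1 s = step_ok y (0, 0) p1 s.
Proof.
rewrite /vertical negb_or => /andP[/negbTE p1_up /negbTE p1_down].
by rewrite /step_ok /shape_ok /height_ok /vertical p1_up p1_down !andbF.
Qed.

Lemma admissible_nonvertical y p2 p1 s p :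
  ~~ vertical s -> admissible y p2 p1 (s :: p) = admissible y (0, 0) (0, 0) (s :: p).
Proof.
move=> s_nv; rewrite /= (step_ok_nonvertical _ _ _ s_nv); congr (_ && _).
case: p => [|t p] //=; by rewrite (step_ok_after_nonvertical _ _ _ s_nv).
Qed.

Lemma admissible_cat_nonvertical y p2 p1 p q :
  ~~ vertical (head (0, 0) q) ->
  admissible y p2 p1 (p ++ q) = admissible y p2 p1 p && admissible (y + height p) (0, 0) (0, 0) q.
Proof.
by case: q => [|s q] q_nv; rewrite admissible_cat // admissible_nonvertical.
Qed.

Lemma admissible_ge0 y p2 p1 p :
  p != [::] -> admissible y p2 p1 p -> 0 <= y + height p.
Proof.
elim: p y p2 p1 => [|s p IH] y p2 p1 //= _ /andP[/andP[_ /and4P[ge0 _ _ _]] adm].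
case: p IH adm => [|t p] IH adm; first by rewrite /height big_seq1.
by rewrite height_cons addrA; apply: IH adm.
Qed.

Lemma height_ok_succ y p2 p1 s :
  0 <= y -> height_ok y p2 p1 s -> height_ok (y + 1) p2 p1 s.
Proof.
move=> y_ge0 /and4P[ge0 _ _ _]; apply/and4P; split.
- lia.
- by apply/implyP => /eqP; lia.
- by apply/negP => /and4P[/eqP y0 _ _ /eqP s_down]; move: ge0; rewrite s_down /=; lia.
- by apply/negP => /and3P[/eqP y0 _ /eqP s_down]; move: ge0; rewrite s_down /=; lia.
Qed.

Lemma admissible_succ y p2 p1 p :
  0 <= y -> admissible y p2 p1 p -> admissible (y + 1) p2 p1 p.
Proof.
elim: p y p2 p1 => [|s p IH] y p2 p1 //= y_ge0 /andP[/andP[shape hok] adm].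
rewrite /step_ok shape height_ok_succ //= addrAC.
by apply: IH adm; case/and4P: hok.
Qed.

Lemma admissible_raise y (d : nat) p2 p1 p :
  0 <= y -> admissible y p2 p1 p -> admissible (y + d%:Z) p2 p1 p.
Proof.
move=> y_ge0 adm; elim: d => [|d IH]; first by rewrite addr0.
by rewrite -addn1 PoszD addrA; apply: admissible_succ IH; lia.
Qed.

Definition columns : seq (seq step) :=
  [:: [:: (1, 1)]; [:: (1, 1); (0, 1)]; [:: (1, 1); (0, 1); (0, 1)];
      [:: (1, 1); (0, -1)]; [:: (1, 1); (0, -1); (0, -1)];
      [:: (1, -1)]; [:: (1, -1); (0, 1)]; [:: (1, -1); (0, 1); (0, 1)];
      [:: (1, -1); (0, -1)]; [:: (1, -1); (0, -1); (0, -1)];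
      [:: (1, 2)]; [:: (1, 2); (0, -1)]; [:: (1, 2); (0, -1); (0, -1)];
      [:: (1, -2)]; [:: (1, -2); (0, 1)]; [:: (1, -2); (0, 1); (0, 1)]].

Definition column_ok (y : int) (c : seq step) : bool := admissible y (0, 0) (0, 0) c.

Lemma column_shape c :
  c \in columns -> [/\ ~~ vertical (head (0, 0) c), c != [::] & all vertical (behead c)].
Proof.
have : all (fun c => [&& ~~ vertical (head (0, 0) c), c != [::] & all vertical (behead c)]) columns.
  by [].
by move=> /allP shape /shape/and3P[].
Qed.

Lemma width_column c : c \in columns -> width c = 1.
Proof.
have : all (fun c => width c == 1) columns by rewrite /= /width !big_cons !big_nil.
by move=> /allP w /w/eqP.
Qed.

Lemma height_column_le3 c : c \in columns -> height c <= 3.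
Proof.
have : all (fun c => height c <= 3) columns by rewrite /= /height !big_cons !big_nil.
by move=> /allP h /h.
Qed.

Lemma column_ok_high y c : 3 <= y -> c \in columns -> column_ok y c.
Proof.
move=> y_ge3 c_col; have -> : y = 3 + `|y - 3|%N%:Z by lia.
by apply: admissible_raise; last by move: c_col; apply/allP.
Qed.

Lemma singleton_column s : s \in allowed_steps -> ~~ vertical s -> [:: s] \in columns.
Proof.
have /allP cols : all (fun s => ~~ vertical s ==> ([:: s] \in columns)) allowed_steps by [].
by move=> /cols/implyP.
Qed.

Lemma rcons_column y c s :
  c \in columns -> vertical s -> column_ok y (rcons c s) -> rcons c s \in columns.
Proof.
have /allP cols : all (fun c => all (fun s =>
    shape_ok (last (0, 0) (belast (0, 0) c)) (last (0, 0) c) s ==> (rcons c s \in columns))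
    [:: (0, 1); (0, -1)]) columns by [].
move=> /cols /allP ext s_vert; rewrite /column_ok -cats1 admissible_cat => /andP[_] /=.
rewrite andbT cats1 => /andP[shape _]; apply: (implyP (ext s _) shape).
by rewrite !inE.
Qed.

Lemma column_ok0_head c : c \in columns -> column_ok 0 c -> head (0, 0) c = (1, 1).
Proof.
have /allP cols : all (fun c => column_ok 0 c ==> (head (0, 0) c == (1, 1))) columns by [].
by move=> /cols/implyP ok /ok/eqP.
Qed.

Lemma head_flatten_columns cs : all (mem columns) cs -> ~~ vertical (head (0, 0) (flatten cs)).
Proof.
case: cs => [|c cs] //= /andP[c_col _].
by case: (column_shape c_col); case: c {c_col}.
Qed.

Lemma width_flatten_columns cs : all (mem columns) cs -> width (flatten cs) = (size cs)%:Z.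
Proof.
elim: cs => [|c cs IH] /=; first by rewrite /width big_nil.
by case/andP=> c_col cols; rewrite width_cat width_column // IH.
Qed.

Lemma find_nonvertical_column c r :
  c \in columns -> ~~ vertical (head (0, 0) r) ->
  find (fun s => ~~ vertical s) (behead (c ++ r)) = (size c).-1.
Proof.
case/column_shape; case: c => [|s c] //= _ _ c_vert r_nv; rewrite find_cat.
have -> : has (fun s => ~~ vertical s) c = false.
  by apply: negbTE; apply/hasPn => t /(allP c_vert); rewrite negbK.
by case: r r_nv => [|t r] /= => [|->]; rewrite addn0.
Qed.

Lemma column_cat_inj c1 c2 r1 r2 :
  c1 \in columns -> c2 \in columns ->
  ~~ vertical (head (0, 0) r1) -> ~~ vertical (head (0, 0) r2) ->
  c1 ++ r1 = c2 ++ r2 -> c1 = c2 /\ r1 = r2.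
Proof.
move=> c1_col c2_col r1_nv r2_nv eq12.
have : (size c1).-1 = (size c2).-1.
  by rewrite -(find_nonvertical_column c1_col r1_nv) -(find_nonvertical_column c2_col r2_nv) eq12.
have [[_ c1_nil _] [_ c2_nil _]] := (column_shape c1_col, column_shape c2_col).
case: c1 c2 c1_nil c2_nil {c1_col c2_col} eq12 => [|s1 c1] [|s2 c2] // _ _ /eqP eq12 /= size12.
by move: eq12; rewrite eqseq_cat /= ?size12 // => /andP[/eqP -> /eqP ->].
Qed.

Lemma flatten_columns_inj cs1 cs2 :
  all (mem columns) cs1 -> all (mem columns) cs2 -> flatten cs1 = flatten cs2 -> cs1 = cs2.
Proof.
elim: cs1 cs2 => [|c1 cs1 IH] [|c2 cs2] //= => [_ | | ].
- by case/andP=> /column_shape[_ + _] _; case: c2.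
- by move=> /andP[/column_shape[_ + _] _]; case: c1.
move=> /andP[c1_col cols1] /andP[c2_col cols2] /column_cat_inj.
case/(_ c1_col c2_col (head_flatten_columns cols1) (head_flatten_columns cols2)) => -> eq12.
by rewrite (IH cs2).
Qed.

Lemma column_decomposition y p :
  admissible y (0, 0) (0, 0) p -> ~~ vertical (head (0, 0) p) ->
  exists2 cs, all (mem columns) cs & p = flatten cs.
Proof.
elim/last_ind: p => [|q s IH] adm p_nv; first by exists [::].
have adm_q : admissible y (0, 0) (0, 0) q by move: adm; rewrite -cats1 admissible_cat => /andP[].
have q_nv : ~~ vertical (head (0, 0) q) by case: q p_nv {IH adm adm_q}.
have [cs cols q_eq] := IH adm_q q_nv; subst q; clear IH adm_q q_nv.
have [s_vert | s_nv] := boolP (vertical s); last first.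
  have s_allowed : s \in allowed_steps.
    by move: adm; rewrite -cats1 admissible_cat_nonvertical // => /and3P[_ /andP[/and5P[]]].
  exists (rcons cs [:: s]); last by rewrite flatten_rcons cats1.
  by rewrite all_rcons cols andbT; apply: singleton_column.
case/lastP: cs cols p_nv adm => [|cs c]; first by move=> _ /=; rewrite s_vert.
rewrite all_rcons flatten_rcons rcons_cat => /andP[c_col cols] _.
rewrite admissible_cat_nonvertical; last by case: (column_shape c_col); case: (c).
case/andP=> _ /(rcons_column c_col s_vert) ext_col.
by exists (rcons cs (rcons c s)); rewrite ?all_rcons ?cols ?andbT // flatten_rcons.
Qed.

Fixpoint column_seqs (n : nat) : seq (seq (seq step)) :=
  if n is m.+1 then
    [seq rcons cs c | cs <- column_seqs m,
                      c <- [seq c <- columns | column_ok (height (flatten cs)) c]]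
  else [:: [::]].

Lemma column_seqsS n : column_seqs n.+1 =
  [seq rcons cs c | cs <- column_seqs n, c <- [seq c <- columns | column_ok (height (flatten cs)) c]].
Proof. by []. Qed.

Lemma mem_column_seqs n cs :
  cs \in column_seqs n <->
  [/\ size cs = n, all (mem columns) cs & admissible 0 (0, 0) (0, 0) (flatten cs)].
Proof.
elim: n cs => [|n IH] cs.
  by rewrite inE; split=> [/eqP -> // | [/size0nil ->]].
have adm_rcons cs' c : c \in columns -> admissible 0 (0, 0) (0, 0) (flatten (rcons cs' c)) =
    admissible 0 (0, 0) (0, 0) (flatten cs') && column_ok (height (flatten cs')) c.
  move=> c_col; rewrite flatten_rcons admissible_cat_nonvertical ?add0r //.
  by case: (column_shape c_col); case: (c).
split.
- case/allpairsPdep=> cs' [c [/IH[size_cs' cols adm] + ->]].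
  rewrite mem_filter => /andP[c_ok c_col].
  by rewrite size_rcons size_cs' all_rcons cols andbT adm_rcons // adm.
- case: (lastP cs) => [[//] | cs' c]; rewrite size_rcons all_rcons => -[[size_cs']].
  case/andP=> c_col cols; rewrite adm_rcons // => /andP[adm c_ok].
  by apply/allpairsPdep; exists cs', c; split; [apply/IH | rewrite mem_filter c_ok |].
Qed.

Lemma uniq_column_seqs n : uniq (column_seqs n).
Proof.
elim: n => [//|n IH]; apply: allpairs_uniq_dep IH _ _.
- by move=> cs _; rewrite filter_uniq.
- by move=> [cs1 c1] [cs2 c2] _ _ /rcons_inj[-> ->].
Qed.

Lemma endpointE p : endpoint p = (width p, height p).
Proof. by rewrite /endpoint /posx /posy take_size. Qed.

Lemma C3path_to_column_seqs n k p : (0 < n)%N ->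
  C3path_to n k p <->
  exists2 cs, cs \in column_seqs n & height (flatten cs) = k%:Z /\ p = flatten cs.
Proof.
move=> n_gt0; split.
- case=> /C3pathP[head_p adm]; rewrite endpointE => -[w_p h_p].
  have p_nv : ~~ vertical (head (0, 0) p) by rewrite head_p.
  have [cs cols p_eq] := column_decomposition adm p_nv.
  exists cs; last by rewrite -p_eq.
  apply/mem_column_seqs; split; rewrite -?p_eq //.
  by apply/eqP; rewrite -eqz_nat -width_flatten_columns // -p_eq w_p.
- case=> cs /mem_column_seqs[size_cs cols adm] [h_cs ->].
  split; last by rewrite endpointE width_flatten_columns // size_cs h_cs.
  apply/C3pathP; split=> //.
  case: cs size_cs cols adm {h_cs} => [|c cs] /= size_cs; first by rewrite -size_cs in n_gt0.
  case/andP=> c_col cols; rewrite admissible_cat_nonvertical ?head_flatten_columns //.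
  case/andP=> /(column_ok0_head c_col); case: (column_shape c_col) => _ c_nil _.
  by case: c c_nil {c_col}.
Qed.

Definition column_count (n : nat) (z : int) : nat :=
  count (fun cs => height (flatten cs) == z) (column_seqs n).

Lemma paths_count_C3path_to n k : (0 < n)%N ->
  paths_count_is (C3path_to n k) (column_count n k).
Proof.
move=> n_gt0; exists [seq flatten cs | cs <- column_seqs n & height (flatten cs) == k%:Z].
split; last by rewrite size_map size_filter.
- rewrite map_inj_in_uniq ?filter_uniq ?uniq_column_seqs // => cs1 cs2.
  rewrite !mem_filter => /andP[_ /mem_column_seqs[_ cols1 _]] /andP[_ /mem_column_seqs[_ cols2 _]].
  exact: flatten_columns_inj.
- move=> p; rewrite C3path_to_column_seqs //; split.
  + by case/mapP=> cs; rewrite mem_filter => /andP[/eqP h_cs cs_in] ->; exists cs.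
  + case=> cs cs_in [h_cs ->]; apply/mapP; exists cs => //.
    by rewrite mem_filter h_cs eqxx.
Qed.

Lemma column_countS n z :
  column_count n.+1 z =
  (\sum_(c <- columns | column_ok (z - height c) c) column_count n (z - height c))%N.
Proof.
have summand cs c : column_ok (height (flatten cs)) c && (height (flatten (rcons cs c)) == z)
    = (height (flatten cs) == z - height c) && column_ok (z - height c) c.
  rewrite flatten_rcons height_cat.
  have [->|ne] := eqVneq (height (flatten cs)) (z - height c); first by rewrite subrK eqxx andbT.
  by apply: contraNF ne => /andP[_ /eqP <-]; rewrite addrK.
rewrite /column_count column_seqsS -sum1_count big_mkcond big_allpairs_dep.
under eq_bigr => cs _ do rewrite big_filter -big_mkcondr big_mkcond.
rewrite exchange_big [RHS]big_mkcond; apply: eq_bigr => c _.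
under eq_bigr => cs _ do rewrite summand.
case: (column_ok (z - height c) c); last by rewrite big1 // => cs _; rewrite andbF.
by under eq_bigr => cs _ do rewrite andbT; rewrite -big_mkcond sum1_count.
Qed.

Definition quadriz (m : nat) (z : int) : int := if z is Posz k then quadri m k else 0.

Lemma quadriz_neg m z : z < 0 -> quadriz m z = 0.
Proof. by case: z. Qed.

Lemma quadriz_subn m k j :
  quadriz m (k%:Z - j%:Z) = if (j <= k)%N then quadri m (k - j) else 0.
Proof. by case: leqP => [/subzn -> // | lt_kj]; apply: quadriz_neg; lia. Qed.

Lemma quadriz0 z : quadriz 0 z = (z == 0)%:R.
Proof. by case: z => [[|k]|k] //; rewrite /quadriz /quadri expr0 coef1. Qed.

Lemma quadrizS m z : quadriz m.+1 z = \sum_(0 <= i < 4) quadriz m (z - i%:Z).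
Proof.
case: z => [k|k]; last by rewrite big1 // => i _; apply: quadriz_neg; lia.
rewrite {1}/quadriz /quadri exprSr.
rewrite {2}(_ : 1 + 'X + 'X^2 + 'X^3 = \sum_(0 <= i < 4) 'X^i :> {poly int}); last first.
  by rewrite /index_iota /= !big_cons big_nil expr1 expr0 addr0 !addrA.
rewrite mulr_sumr coef_sum; apply: eq_bigr => i _.
by rewrite coefMXn quadriz_subn ltnNge; case: (i <= k)%N.
Qed.

Lemma quadriz_sym m z : quadriz m z = quadriz m ((3 * m)%:Z - z).
Proof.
elim: m z => [|m IH] z; first by rewrite !quadriz0 sub0r oppr_eq0.
rewrite !quadrizS [RHS]big_nat_rev; apply: eq_big_nat => i /andP[_ lt_i4].
by rewrite IH; congr quadriz; lia.
Qed.

Lemma quadriz_gt m z : (3 * m)%:Z < z -> quadriz m z = 0.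
Proof.
elim: m z => [|m IH] z lt_z; first by rewrite quadriz0; case: eqP => //; lia.
by rewrite quadrizS big_nat big1 // => i /andP[_ lt_i4]; apply: IH; lia.
Qed.

Definition free_walks (n : nat) (z : int) : int := quadriz (2 * n) ((3 * n)%:Z + z).

Lemma perm_column_heights :
  perm_eq (map height columns) [seq i%:Z + j%:Z - 3 | i <- iota 0 4, j <- iota 0 4].
Proof. by rewrite /= /height !big_cons !big_nil. Qed.

Lemma free_walksS n z : free_walks n.+1 z = \sum_(c <- columns) free_walks n (z - height c).
Proof.
rewrite -(big_map height xpredT (fun d => free_walks n (z - d))).
rewrite (perm_big _ perm_column_heights) big_allpairs_dep /free_walks mulnS quadrizS.
apply: eq_bigr => i _; rewrite quadrizS; apply: eq_bigr => j _.
by congr quadriz; lia.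
Qed.

Lemma free_walksN n z : free_walks n (- z) = free_walks n z.
Proof. by rewrite /free_walks quadriz_sym; congr quadriz; lia. Qed.

Definition reflected (n : nat) (z : int) : int := free_walks n z - free_walks n (z + 1).

Lemma reflectedS n z : reflected n.+1 z = \sum_(c <- columns) reflected n (z - height c).
Proof.
rewrite /reflected !free_walksS -sumrB; apply: eq_bigr => c _.
by congr (_ - free_walks n _); ring.
Qed.

Lemma reflectedN n z : reflected n (- z - 1) = - reflected n z.
Proof.
rewrite /reflected opprB -(free_walksN n (z + 1)) -(free_walksN n z).
by congr (free_walks n _ - free_walks n _); ring.
Qed.

(* [column_ok y c] does not force [0 <= y], hence the truncation. *)
Lemma boundary_reflection (F : int -> int) z :
  (forall w, F (- w - 1) = - F w) -> 0 <= z ->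
  \sum_(c <- columns | column_ok (z - height c) c)
     (if 0 <= z - height c then F (z - height c) else 0)
  = \sum_(c <- columns) F (z - height c).
Proof.
move=> F_anti z_ge0.
have F1 : F (-1) = - F 0 by rewrite -F_anti.
have F2 : F (-2) = - F 1 by rewrite -F_anti.
have F3 : F (-3) = - F 2 by rewrite -F_anti.
have [z_ge6 | z_lt6] := lerP 6 z.
  rewrite big_mkcond; apply: eq_big_seq => c c_col.
  have h_le3 := height_column_le3 c_col.
  by rewrite column_ok_high ?ifT //; lia.
rewrite big_mkcond.
have : z = 0 \/ z = 1 \/ z = 2 \/ z = 3 \/ z = 4 \/ z = 5 by lia.
(* [-?[F v]/(F v)] rewrites every argument of [F] that computes to [v] into the numeral
   [v], so that [ring] sees equal atoms. *)
case=> [|[|[|[|[|]]]]] ->; rewrite /columns /height !big_cons !big_nil /= ?F1 ?F2 ?F3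
  -?[F 0]/(F 0) -?[F 1]/(F 1) -?[F 2]/(F 2) -?[F 3]/(F 3) -?[F 4]/(F 4) -?[F 5]/(F 5)
  -?[F 6]/(F 6) -?[F 7]/(F 7) -?[F 8]/(F 8); ring.
Qed.

Lemma column_count_reflected n z :
  (column_count n z)%:Z = if 0 <= z then reflected n z else 0.
Proof.
elim: n z => [|n IH] z.
  rewrite /column_count /= /height big_nil /reflected /free_walks !add0r !quadriz0.
  by case: z => [[|k]|[|k]].
rewrite column_countS -natz natr_sum; under eq_bigr => c _ do rewrite natz IH.
have [z_lt0 | z_ge0] := ltrP z 0.
  rewrite big1_seq // => c /andP[ok c_col].
  case: (column_shape c_col) => _ c_nil _.
  by have := admissible_ge0 c_nil ok; rewrite subrK; lia.
by rewrite boundary_reflection // ?reflectedS // => w; apply: reflectedN.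
Qed.

Theorem theorem2p4 (n k : nat) : (0 < n)%N -> (0 < k)%N ->
  exists c : nat, paths_count_is (C3path_to n k) c /\ c%:Z = C3coef n k.
Proof.
move=> n_gt0 _; exists (column_count n k); split; first exact: paths_count_C3path_to.
rewrite column_count_reflected /reflected /free_walks /C3coef.
case: leqP => [_ | k_gt].
- by rewrite -!PoszD addnA.
- by rewrite !quadriz_gt ?subr0 //; lia.
Qed.
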